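(* Let $\alpha\in\mathbb{R}\setminus\{0\}$, let $\delta^{\star}(\alpha)=1/\alpha^2$ if $\alpha\le 2$ and $\delta^{\star}(\alpha)=\frac{1}{2\alpha}\exp\{1-\frac{\alpha}{2}\}$ if $\alpha>2$, let $|\delta|\le\delta^{\star}(\alpha)$, and let $C(u,v)=uv+\delta(1-e^{\alpha(u-u^2)})(1-e^{\alpha(v-v^2)})$ on $[0,1]^2$. Define Spearman's rho $\rho_C=12\int_0^1\int_0^1C(u,v)\,du\,dv-3$, Gini's gamma $\gamma_C=4\{\int_0^1C(u,1-u)\,du-\int_0^1(u-C(u,u))\,du\}$, Kendall's tau $\tau_C=4\int_0^1\int_0^1 C(u,v)\,dC(u,v)-1$, Blest's measure $\eta_C=24\int_0^1\int_0^1(1-u)C(u,v)\,du\,dv-2$, and Spearman's footrule $\phi_C=6\int_0^1 C(u,u)\,du-2$. Then $$\eta_C=\rho_C=\tfrac{3}{2}\tau_C\quad\text{and}\quad \phi_C=\tfrac{3}{4}\gamma_C.$$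
   Context: $\int\int C\,dC$ denotes the Lebesgue–Stieltjes integral of $C$ with respect to the probability measure with distribution function $C$ (equivalently $\int\int C(u,v)c(u,v)\,du\,dv$ with $c=\partial^2C/\partial u\partial v$). *)

From Stdlib Require Import Reals.
From Coquelicot Require Import Coquelicot.
Open Scope R_scope.

Definition delta_star (alpha : R) : R :=
  if Rle_dec alpha 2 then 1 / alpha ^ 2
  else (1 / (2 * alpha)) * exp (1 - alpha / 2).

Definition Cfam (alpha delta : R) (u v : R) : R :=
  u * v + delta * (1 - exp (alpha * (u - u ^ 2))) * (1 - exp (alpha * (v - v ^ 2))).

Definition cdens (C : R -> R -> R) (u v : R) : R :=
  Derive (fun x => Derive (fun y => C x y) v) u.

Definition int2 (f : R -> R -> R) : R :=
  RInt (fun u => RInt (fun v => f u v) 0 1) 0 1.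

Definition spearman_rho (C : R -> R -> R) : R := 12 * int2 C - 3.

Definition gini_gamma (C : R -> R -> R) : R :=
  4 * (RInt (fun u => C u (1 - u)) 0 1 - RInt (fun u => u - C u u) 0 1).

Definition kendall_tau (C : R -> R -> R) : R :=
  4 * int2 (fun u v => C u v * cdens C u v) - 1.

Definition blest_eta (C : R -> R -> R) : R :=
  24 * int2 (fun u v => (1 - u) * C u v) - 2.

Definition spearman_footrule (C : R -> R -> R) : R :=
  6 * RInt (fun u => C u u) 0 1 - 2.

(** Every member of the family has the form [C(u,v) = uv + δ f(u) f(v)] with
    [f(u) = 1 - exp(α(u - u²))], a C¹ profile vanishing at 0 and 1 and symmetric
    under [u ↦ 1 - u].  Each measure is then an affine function of one of two
    numbers, [I = ∫ f] or [J = ∫ f²]: symmetry gives [∫ u f = I/2], integration by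
    parts gives [∫ u f' = -I], and [∫ f f' = 0].  One finds
    [ρ = η = 12 δ I²], [τ = 8 δ I²], [φ = 6 δ J] and [γ = 8 δ J]. *)

From Stdlib Require Import Reals Lra ssreflect.
From Coquelicot Require Import Coquelicot.
Open Scope R_scope.

Lemma is_RInt_lin {g h k : R -> R} {a b Ig Ih L : R} (c d : R) :
  is_RInt g a b Ig -> is_RInt h a b Ih ->
  (forall x, k x = c * g x + d * h x) -> c * Ig + d * Ih = L ->
  is_RInt k a b L.
Proof.
move=> Hg Hh Hk <-.
apply: (is_RInt_ext (fun x => plus (scal c (g x)) (scal d (h x)))).
  by move=> x _; rewrite Hk.
exact: is_RInt_plus (is_RInt_scal _ _ _ c _ Hg) (is_RInt_scal _ _ _ d _ Hh).
Qed.

Lemma continuous_Rplus (g h : R -> R) (x : R) :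
  continuous g x -> continuous h x -> continuous (fun y => g y + h y) x.
Proof. exact: (@continuous_plus _ _ R_NormedModule). Qed.

Lemma continuous_Rmult (g h : R -> R) (x : R) :
  continuous g x -> continuous h x -> continuous (fun y => g y * h y) x.
Proof. exact: continuous_mult. Qed.

Lemma is_RInt_RInt_continuous (g : R -> R) (a b : R) :
  (forall x, continuous g x) -> is_RInt g a b (RInt g a b).
Proof.
by move=> Hg; apply/(@RInt_correct R_CompleteNormedModule)/ex_RInt_continuous.
Qed.

Lemma is_RInt_FTC (F g : R -> R) (a b : R) :
  (forall x, is_derive F x (g x)) -> (forall x, continuous g x) ->
  is_RInt g a b (F b - F a).
Proof. by move=> HF Hg; apply: is_RInt_derive => x _. Qed.

Lemma is_RInt_id : is_RInt (fun u => u) 0 1 (1 / 2).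
Proof.
have -> : 1 / 2 = 1 ^ 2 / 2 - 0 ^ 2 / 2 by field.
apply: (is_RInt_FTC (fun x => x ^ 2 / 2)) => x.
  by auto_derive => //; field.
exact: continuous_id.
Qed.

Lemma is_RInt_sqr : is_RInt (fun u => u * u) 0 1 (1 / 3).
Proof.
have -> : 1 / 3 = 1 ^ 3 / 3 - 0 ^ 3 / 3 by field.
apply: (is_RInt_FTC (fun x => x ^ 3 / 3)) => x.
  by auto_derive => //; field.
exact: continuous_Rmult (continuous_id x) (continuous_id x).
Qed.

Lemma int2_of_inner {F : R -> R -> R} {G : R -> R} {L : R} :
  (forall u, is_RInt (F u) 0 1 (G u)) -> is_RInt G 0 1 L -> int2 F = L.
Proof.
move=> HF HG; rewrite /int2 -(is_RInt_unique _ _ _ _ HG).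
by apply: RInt_ext => u _; apply: is_RInt_unique.
Qed.

(* The reflection [u ↦ 1 - u] turns [∫ u g] into [∫ (1 - u) g = ∫ g - ∫ u g]. *)
Lemma is_RInt_id_mul_sym (g : R -> R) :
  (forall x, continuous g x) -> (forall u, g (1 - u) = g u) ->
  is_RInt (fun u => u * g u) 0 1 (RInt g 0 1 / 2).
Proof.
move=> Hg Hsym.
have Hug : is_RInt (fun u => u * g u) 0 1 (RInt (fun u => u * g u) 0 1).
  by apply: is_RInt_RInt_continuous => x; apply: continuous_Rmult (continuous_id x) (Hg x).
set M := RInt (fun u => u * g u) 0 1 in Hug *.
have Hrefl : is_RInt (fun u => (1 - u) * g u) 0 1 M.
  have Hswap : is_RInt (fun u => u * g u) (-1 * 0 + 1) (-1 * 1 + 1) (- M).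
    have -> : -1 * 0 + 1 = 1 by field.
    have -> : -1 * 1 + 1 = 0 by field.
    exact: is_RInt_swap.
  apply: (is_RInt_lin (-1) 0 (is_RInt_comp_lin _ _ _ _ _ _ Hswap) Hug) => [u|]; last by field.
  rewrite /scal /= /mult /=; have -> : -1 * u + 1 = 1 - u by field.
  by rewrite Hsym; field.
have Hdiff : is_RInt (fun u => (1 - u) * g u) 0 1 (RInt g 0 1 - M).
  by apply: (is_RInt_lin 1 (-1) (is_RInt_RInt_continuous g 0 1 Hg) Hug) => [u|]; field.
have Heq : RInt g 0 1 - M = M.
  by rewrite -(is_RInt_unique _ _ _ _ Hdiff); apply: is_RInt_unique.
have -> : RInt g 0 1 / 2 = M by lra.
exact: Hug.
Qed.

Lemma is_RInt_id_mul_derive (g g' : R -> R) :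
  (forall x, is_derive g x (g' x)) -> (forall x, continuous g' x) ->
  is_RInt (fun u => u * g' u) 0 1 (g 1 - RInt g 0 1).
Proof.
move=> Hg Hg'.
have g_cont x : continuous g x by apply: ex_derive_continuous; exists (g' x).
have Hparts : is_RInt (fun u => g u + u * g' u) 0 1 (1 * g 1 - 0 * g 0).
  apply: (is_RInt_FTC (fun x => x * g x)) => x.
    by auto_derive; [exists (g' x) | rewrite (is_derive_unique _ _ _ (Hg x)); field].
  by apply: continuous_Rplus => //; apply: continuous_Rmult => //; apply: continuous_id.
apply: (is_RInt_lin 1 (-1) Hparts (is_RInt_RInt_continuous g 0 1 g_cont)) => [u|]; field.
Qed.

Set Implicit Arguments.
Record symmetric_profile (f f' : R -> R) : Prop := {
  profile_derive : forall x, is_derive f x (f' x);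
  profile_derive_cont : forall x, continuous f' x;
  profile_sym : forall u, f (1 - u) = f u;
  profile_0 : f 0 = 0 }.
Unset Implicit Arguments.

Definition perturbed_product (f : R -> R) (δ u v : R) : R := u * v + δ * f u * f v.

Section PerturbedProduct.

Context {f f' : R -> R} (Hf : symmetric_profile f f').

Local Notation C δ := (perturbed_product f δ).
Local Notation I := (RInt f 0 1).
Local Notation J := (RInt (fun u => f u * f u) 0 1).

(* Eta-expanded, as produced by [auto_derive]; [rewrite] would not see [Derive f]. *)
Lemma ex_derive_profile x : ex_derive (fun y => f y) x.
Proof. by exists (f' x); exact: (profile_derive Hf). Qed.

Lemma Derive_profile x : Derive (fun y => f y) x = f' x.
Proof. exact/is_derive_unique/(profile_derive Hf). Qed.

Lemma profile_cont x : continuous f x.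
Proof. exact/ex_derive_continuous/ex_derive_profile. Qed.

Lemma profile_1 : f 1 = 0.
Proof. by rewrite -(profile_0 Hf) -(profile_sym Hf 0) Rminus_0_r. Qed.

Lemma is_RInt_profile : is_RInt f 0 1 I.
Proof. exact: is_RInt_RInt_continuous profile_cont. Qed.

Lemma is_RInt_profile_sqr : is_RInt (fun u => f u * f u) 0 1 J.
Proof.
by apply: is_RInt_RInt_continuous => x; apply: continuous_Rmult; apply: profile_cont.
Qed.

Lemma is_RInt_id_mul_profile : is_RInt (fun u => u * f u) 0 1 (I / 2).
Proof. exact: is_RInt_id_mul_sym profile_cont (profile_sym Hf). Qed.

Lemma is_RInt_id_mul_profile' : is_RInt (fun u => u * f' u) 0 1 (- I).
Proof.
have := is_RInt_id_mul_derive f f' (profile_derive Hf) (profile_derive_cont Hf).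
by rewrite profile_1 Rminus_0_l.
Qed.

Lemma is_RInt_profile_mul_profile' : is_RInt (fun u => f u * f' u) 0 1 0.
Proof.
have HFTC : is_RInt (fun u => f u * f' u) 0 1 (f 1 * f 1 / 2 - f 0 * f 0 / 2).
  apply: (is_RInt_FTC (fun x => f x * f x / 2)) => x.
    auto_derive; first by repeat split; apply: ex_derive_profile.
    by rewrite Derive_profile; field.
  exact: continuous_Rmult (profile_cont x) (profile_derive_cont Hf x).
by rewrite profile_1 (profile_0 Hf) Rmult_0_l Rdiv_0_l Rminus_0_r in HFTC.
Qed.

Lemma cdens_perturbed_product δ u v : cdens (C δ) u v = 1 + δ * f' u * f' v.
Proof.
rewrite /cdens (Derive_ext _ (fun x => x + δ * f x * f' v)) => [|x].
  apply: is_derive_unique; auto_derive; first by repeat split; apply: ex_derive_profile.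
  by rewrite Derive_profile; field.
apply: is_derive_unique; rewrite /perturbed_product; auto_derive.
  by repeat split; apply: ex_derive_profile.
by rewrite Derive_profile; field.
Qed.

Lemma is_RInt_perturbed_product_section δ u :
  is_RInt (C δ u) 0 1 (u / 2 + δ * I * f u).
Proof.
by apply: (is_RInt_lin u (δ * f u) is_RInt_id is_RInt_profile) => [v|];
  rewrite /perturbed_product; field.
Qed.

Lemma is_RInt_perturbed_product_iterated δ :
  is_RInt (fun u => u / 2 + δ * I * f u) 0 1 (1 / 4 + δ * I ^ 2).
Proof.
by apply: (is_RInt_lin (1 / 2) (δ * I) is_RInt_id is_RInt_profile) => [u|]; field.
Qed.

Lemma is_RInt_perturbed_product_diag δ :
  is_RInt (fun u => C δ u u) 0 1 (1 / 3 + δ * J).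
Proof.
by apply: (is_RInt_lin 1 δ is_RInt_sqr is_RInt_profile_sqr) => [u|];
  rewrite /perturbed_product; field.
Qed.

Lemma spearman_rho_perturbed_product δ : spearman_rho (C δ) = 12 * δ * I ^ 2.
Proof.
rewrite /spearman_rho (int2_of_inner (is_RInt_perturbed_product_section δ)
  (is_RInt_perturbed_product_iterated δ)).
field.
Qed.

Lemma blest_eta_perturbed_product δ : blest_eta (C δ) = 12 * δ * I ^ 2.
Proof.
have Hmoment : is_RInt (fun u => u * (u / 2 + δ * I * f u)) 0 1 (1 / 6 + δ * I * (I / 2)).
  by apply: (is_RInt_lin (1 / 2) (δ * I) is_RInt_sqr is_RInt_id_mul_profile) => [u|]; field.
have Hiterated : is_RInt (fun u => (1 - u) * (u / 2 + δ * I * f u)) 0 1 (1 / 12 + δ * I ^ 2 / 2).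
  by apply: (is_RInt_lin 1 (-1) (is_RInt_perturbed_product_iterated δ) Hmoment) => [u|]; field.
rewrite /blest_eta (int2_of_inner _ Hiterated) => [|u]; first by field.
exact: is_RInt_scal _ _ _ (1 - u) _ (is_RInt_perturbed_product_section δ u).
Qed.

Lemma kendall_tau_perturbed_product δ : kendall_tau (C δ) = 8 * δ * I ^ 2.
Proof.
have Hweighted u : is_RInt (fun v => f' v * C δ u v) 0 1 (- u * I).
  by apply: (is_RInt_lin u (δ * f u) is_RInt_id_mul_profile' is_RInt_profile_mul_profile')
    => [v|]; rewrite /perturbed_product; field.
have Hsection u : is_RInt (fun v => C δ u v * cdens (C δ) u v) 0 1
    (u / 2 + δ * I * f u + δ * f' u * (- u * I)).
  apply: (is_RInt_lin 1 (δ * f' u) (is_RInt_perturbed_product_section δ u) (Hweighted u))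
    => [v|]; last by field.
  by rewrite cdens_perturbed_product; field.
have Hiterated : is_RInt (fun u => u / 2 + δ * I * f u + δ * f' u * (- u * I)) 0 1
    (1 / 4 + 2 * δ * I ^ 2).
  by apply: (is_RInt_lin 1 (- (δ * I)) (is_RInt_perturbed_product_iterated δ)
    is_RInt_id_mul_profile') => [u|]; field.
by rewrite /kendall_tau (int2_of_inner Hsection Hiterated); field.
Qed.

Lemma spearman_footrule_perturbed_product δ : spearman_footrule (C δ) = 6 * δ * J.
Proof.
by rewrite /spearman_footrule (is_RInt_unique _ _ _ _ (is_RInt_perturbed_product_diag δ)); field.
Qed.

Lemma gini_gamma_perturbed_product δ : gini_gamma (C δ) = 8 * δ * J.
Proof.
have Hgap : is_RInt (fun u => u - C δ u u) 0 1 (1 / 6 - δ * J).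
  by apply: (is_RInt_lin 1 (-1) is_RInt_id (is_RInt_perturbed_product_diag δ)) => [u|]; field.
have Hanti : is_RInt (fun u => C δ u (1 - u)) 0 1 (1 / 6 + δ * J).
  apply: (is_RInt_lin 1 (2 * δ) Hgap is_RInt_profile_sqr) => [u|]; last by field.
  by rewrite /perturbed_product (profile_sym Hf); field.
by rewrite /gini_gamma (is_RInt_unique _ _ _ _ Hgap) (is_RInt_unique _ _ _ _ Hanti); field.
Qed.

End PerturbedProduct.

Definition exp_profile (alpha u : R) : R := 1 - exp (alpha * (u - u ^ 2)).

Definition exp_profile' (alpha u : R) : R := - alpha * (1 - 2 * u) * exp (alpha * (u - u ^ 2)).

Lemma exp_profile_symmetric (alpha : R) :
  symmetric_profile (exp_profile alpha) (exp_profile' alpha).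
Proof.
split=> [x | x | u |]; rewrite /exp_profile /exp_profile'.
- auto_derive => //.
  have -> : x + - (x * (x * 1)) = x - x ^ 2 by ring.
  ring.
- by apply: (@ex_derive_continuous R_AbsRing R_NormedModule); auto_derive.
- by have -> : (1 - u) - (1 - u) ^ 2 = u - u ^ 2 by ring.
- have -> : alpha * (0 - 0 ^ 2) = 0 by ring.
  by rewrite exp_0; ring.
Qed.

Theorem mainTheorem3 (alpha delta : R) (Halpha : alpha <> 0)
  (Hdelta : Rabs delta <= delta_star alpha) :
  blest_eta (Cfam alpha delta) = spearman_rho (Cfam alpha delta) /\
  spearman_rho (Cfam alpha delta) = 3 / 2 * kendall_tau (Cfam alpha delta) /\
  spearman_footrule (Cfam alpha delta) = 3 / 4 * gini_gamma (Cfam alpha delta).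
Proof.
(* [Halpha] and [Hdelta] only make [Cfam alpha delta] a copula; the identities
   hold for all [alpha] and [delta]. *)
have Hprofile := exp_profile_symmetric alpha.
change (Cfam alpha delta) with (perturbed_product (exp_profile alpha) delta).
rewrite (blest_eta_perturbed_product Hprofile) (spearman_rho_perturbed_product Hprofile)
  (kendall_tau_perturbed_product Hprofile) (spearman_footrule_perturbed_product Hprofile)
  (gini_gamma_perturbed_product Hprofile).
by split; [|split]; field.
Qed.
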